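(* Let $X$ be a topological space, let $(S,\mathcal S)$ be an $\alpha$-scaffold in $X$, and let $\mathcal U$ be a collection of open subsets of $X$ with $|\mathcal U|<\mathfrak b$. Then there exists $S'\le_{\mathcal S}S$ such that every $U\in\mathcal U$ with $\mathrm{cor}\,S'\in U$ contains all but finitely many $T\in\mathcal S'^-$, where $\mathcal S'$ is the stratification of $S'$ witnessing $S'\le_{\mathcal S}S$.
   Context: $\mathfrak b$ is the least cardinality of an unbounded (with respect to eventual domination) family in $\omega^\omega$. Scaffolds in a space $X$ are defined by recursion. A pair $(S,\mathcal S)$ with $S\subseteq X$, $\mathcal S\subseteq 2^S$ is: (S.0) a $0$-scaffold if $S=\{x\}$, $\mathcal S=\{S\}$; then $\mathrm{ht}(S)=\mathrm{ht}_S(x)=0$ and $\mathrm{cor}\,S=x$. (S.1) an $\alpha$-scaffold if there are $x\in S$, pairwise disjoint open sets $U_n\subseteq X$, and $\alpha_n$-scaffolds $(S_n,\mathcal S_n)$ $(n\in\omega)$ with $(\alpha_n)$ nondecreasing, $\alpha=\min\{\beta:\beta>\alpha_n\text{ for all }n\}$, $\mathrm{cor}\,S_n\to x$, $\overline{S_n}\subseteq U_n$, $x\notin\overline{U_n}$, $S=\{x\}\cup\bigcup_nS_n$, $\mathcal S=\{S\}\cup\bigcup_n\mathcal S_n$; then $\mathrm{ht}(S)=\mathrm{ht}_S(x)=\alpha$, $\mathrm{ht}_S(x')=\mathrm{ht}_{S_n}(x')$ for $x'\in S_n$, and $\mathrm{cor}\,S=x$. $\mathcal S$ is called a stratification of $S$.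 For $S''\in\mathcal S$ let $\mathcal S|_{S''}=\{T\in\mathcal S:T\subseteq S''\}$. $\mathcal S^-$ is the set of $\subseteq$-maximal elements of $\mathcal S\setminus\{S\}$. Proper subscaffolds are defined recursively: for $S'\subseteq S$, $S'\le_{\mathcal S}S$ means $\mathrm{cor}\,S'=\mathrm{cor}\,S$ and there is a stratification $\mathcal S'$ of $S'$ such that $\mathcal S'^-\ne\emptyset$ whenever $\mathcal S^-\neq\emptyset$, and each $\beta$-scaffold $B'\in\mathcal S'^-$ satisfies $B'\le_{\mathcal S|_B}B$ for some $\beta$-scaffold $B\in\mathcal S^-$. *)

From HB Require Import structures.
From mathcomp Require Import all_boot all_order all_algebra.
From mathcomp Require Import all_classical all_reals all_analysis.
Set Implicit Arguments. Unset Strict Implicit. Unset Printing Implicit Defensive.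
Local Open Scope classical_set_scope.

(* Countable ordinals (heights) as well-founded countably-branching trees:
   [TZ] is 0, [TO a] is the least ordinal strictly above every [a n]
   (= sup_n (a n + 1)). Ordinal order on trees: *)
Inductive tord : Type := TZ : tord | TO : (nat -> tord) -> tord.

Fixpoint tle (t s : tord) : Prop :=
  match t with
  | TZ => True
  | TO f => forall n, match s with
                      | TZ => False
                      | TO g => exists m, tle (f n) (g m)
                      end
  end.

Definition teq (t s : tord) : Prop := tle t s /\ tle s t.

(* [scaffold a S SS x]: (S, SS) is an a-scaffold in X with cor S = x. *)
Inductive scaffold {X : topologicalType} :
    tord -> set X -> set (set X) -> X -> Prop :=
| scaffold0 (x : X) : scaffold TZ [set x] [set [set x]] x
| scaffoldS (x : X) (U : nat -> set X) (Sn : nat -> set X)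
    (SSn : nat -> set (set X)) (a : nat -> tord) (xn : nat -> X) :
    (forall n, scaffold (a n) (Sn n) (SSn n) (xn n)) ->
    (forall n, tle (a n) (a n.+1)) ->
    (forall n, open (U n)) ->
    (forall n m, n <> m -> U n `&` U m = set0) ->
    xn @ \oo --> x ->
    (forall n, closure (Sn n) `<=` U n) ->
    (forall n, ~ closure (U n) x) ->
    scaffold (TO a) (x |` \bigcup_n Sn n)
      ([set x |` \bigcup_n Sn n] `|` \bigcup_n SSn n) x.

Definition restr {X : Type} (SS : set (set X)) (S'' : set X) : set (set X) :=
  [set T | SS T /\ T `<=` S''].

Definition maxel {X : Type} (S : set X) (SS : set (set X)) : set (set X) :=
  [set T | SS T /\ T <> S /\
     forall T', SS T' -> T' <> S -> T `<=` T' -> T' = T].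

(* [subsc S' SS' S SS]: the stratification SS' of S' witnesses S' <=_{SS} S. *)
Inductive subsc {X : topologicalType} :
    set X -> set (set X) -> set X -> set (set X) -> Prop :=
| subscI (S' : set X) (SS' : set (set X)) (S : set X) (SS : set (set X)) :
    (exists x, (exists a, scaffold a S' SS' x) /\ (exists b, scaffold b S SS x)) ->
    (maxel S SS !=set0 -> maxel S' SS' !=set0) ->
    (forall B', maxel S' SS' B' ->
       forall (a : tord) (y : X), scaffold a B' (restr SS' B') y ->
       exists B, maxel S SS B /\
         (exists (b : tord) (z : X), scaffold b B (restr SS B) z /\ teq a b) /\
         exists TT, subsc B' TT B (restr SS B)) ->
    subsc S' SS' S SS.

Definition edom (f g : nat -> nat) : Prop := \forall n \near \oo, (f n <= g n)%N.
Definition unbounded_family (F : set (nat -> nat)) : Prop :=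
  ~ exists g, forall f, F f -> edom f g.
Definition card_lt_b {T : Type} (A : set T) : Prop :=
  forall F : set (nat -> nat), unbounded_family F ->
    ((A #<= F) /\ ~ (F #<= A))%card.

From HB Require Import structures.
From mathcomp Require Import all_boot all_order all_algebra.
From mathcomp Require Import all_classical all_reals all_analysis.
Local Open Scope classical_set_scope.

(* At a successor step with pieces S_n, refine every
   S_n by induction; for an open U around cor S_n only finitely many pieces of
   the refinement leave U, so dropping its first h_U(n) pieces puts it inside U.
   Fewer than b functions h_U are eventually dominated by a single g. Keeping
   the refinement of S_n without its first g(n) pieces gives S': if U contains
   cor S, then for almost all n both cor S_n lies in U (the cores converge)
   and g(n) >= h_U(n), so the n-th piece of S' lies in U. *)

Lemma tle_refl t : tle t t.
Proof. by elim: t => [//|f IH] /= n; exists n; apply: IH. Qed.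

Lemma tle_trans {t s r} : tle t s -> tle s r -> tle t r.
Proof.
elim: t s r => [//|f IH] [|g] [|h] //= fg gh n.
have [m fgm] := fg n; have [k gmh] := gh m.
by exists k; apply: IH fgm gmh.
Qed.

Lemma teq_refl t : teq t t.
Proof. by split; apply: tle_refl. Qed.

Lemma teq_trans {t s r} : teq t s -> teq s r -> teq t r.
Proof. by move=> [ts st] [sr rs]; split; [apply: tle_trans sr|apply: tle_trans st]. Qed.

Lemma teq_TO f g : (forall n, teq (f n) (g n)) -> teq (TO f) (TO g).
Proof. by move=> fg; split=> n; exists n; case: (fg n). Qed.

Lemma teq_TO_shift {f N} : (forall n, tle (f n) (f n.+1)) ->
  teq (TO (fun k => f (k + N)%N)) (TO f).
Proof.
move=> f_nd; have f_mono n k : tle (f n) (f (n + k)%N).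
  elim: k => [|k IH]; first by rewrite addn0; apply: tle_refl.
  by rewrite addnS; apply: tle_trans IH (f_nd _).
by split=> n /=; [exists (n + N)%N; apply: tle_refl|exists n; apply: f_mono].
Qed.

Lemma finite_nat_bounded (A : set nat) :
  finite_set A -> exists N, forall k, A k -> (k < N)%N.
Proof.
move=> /finite_fsetP [F ->]; exists (\max_(i <- finmap.enum_fset F) i).+1 => k Fk.
by rewrite ltnS; apply: (@leq_bigmax_seq _ _ xpredT id k).
Qed.

Lemma card_lt_b_dominated {T} {A : set T} (h : T -> nat -> nat) :
  card_lt_b A -> exists g, forall V, A V -> edom (h V) g.
Proof.
move=> Ab; apply: contrapT => no_bound.
have unb : unbounded_family (h @` A).
  by move=> [g hg]; apply: no_bound; exists g => V AV; apply: hg; exists V.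
by have [_] := Ab _ unb; apply; apply: card_image_le.
Qed.

Local Notation glue x Sn := (x |` \bigcup_n Sn n).
Local Notation glue_strata x Sn SSn := ([set glue x Sn] `|` \bigcup_n SSn n).

Section Scaffolds.
Context {X : topologicalType}.

Lemma scaffold_shape {a S SS} {x : X} : scaffold a S SS x ->
  [/\ S x, SS S & forall T, SS T -> T `<=` S /\ T !=set0].
Proof.
elim=> {a S SS x} [x|x U Sn SSn a xn _ IH _ _ _ _ _ _].
  by split=> // T ->; split=> //; exists x.
split=> [|//|T [->|[n _ SSnT]]]; [by left|by left|by split=> //; exists x; left|].
have [_ _ /(_ T SSnT) [TSn T0]] := IH n.
by split=> // y /TSn Sny; right; exists n.
Qed.

Set Implicit Arguments.
Record scaffold_step (x : X) (U Sn : nat -> set X) (SSn : nat -> set (set X))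
    (a : nat -> tord) (xn : nat -> X) : Prop := ScaffoldStep {
  step_scaffold : forall n, scaffold (a n) (Sn n) (SSn n) (xn n);
  step_tle : forall n, tle (a n) (a n.+1);
  step_open : forall n, open (U n);
  step_disjoint : forall n m, n <> m -> U n `&` U m = set0;
  step_cvg : xn @ \oo --> x;
  step_closure : forall n, closure (Sn n) `<=` U n;
  step_away : forall n, ~ closure (U n) x }.
Unset Implicit Arguments.

Lemma scaffold_of_step {x U Sn SSn a xn} : scaffold_step x U Sn SSn a xn ->
  scaffold (TO a) (glue x Sn) (glue_strata x Sn SSn) x.
Proof. by case; apply: scaffoldS. Qed.

Lemma scaffold_inv {b S SS} {y : X} : scaffold b S SS y ->
  (b = TZ /\ S = [set y] /\ SS = [set [set y]]) \/
  exists U Sn SSn a xn, [/\ b = TO a, S = glue y Sn, SS = glue_strata y Sn SSn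
                          & scaffold_step y U Sn SSn a xn].
Proof.
case=> [|z U Sn SSn a xn *]; first by left.
by right; exists U, Sn, SSn, a, xn; split.
Qed.

Lemma maxel_singleton {x : X} {T} : ~ maxel [set x] [set [set x]] T.
Proof. by move=> [-> []]. Qed.

Lemma subsc_singleton (x : X) : subsc [set x] [set [set x]] [set x] [set [set x]].
Proof.
apply: subscI => [|[T /maxel_singleton]//|B' /maxel_singleton//].
by exists x; split; exists TZ; apply: scaffold0.
Qed.

Section Step.
Context {x : X} {U Sn : nat -> set X} {SSn : nat -> set (set X)}.
Context {a : nat -> tord} {xn : nat -> X}.
Hypothesis D : scaffold_step x U Sn SSn a xn.

Lemma piece_sub n : Sn n `<=` U n.
Proof. by move=> y Sny; apply: (step_closure D); apply: subset_closure. Qed.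

Lemma cor_notin_piece n : ~ Sn n x.
Proof. by move=> /piece_sub /subset_closure; apply: (step_away D). Qed.

Lemma piece_cor n : Sn n (xn n).
Proof. by have [] := scaffold_shape (step_scaffold D n). Qed.

Lemma pieces_meet {n m y} : Sn n y -> Sn m y -> n = m.
Proof.
move=> /piece_sub Uny /piece_sub Umy; apply: contrapT => nm.
have : (U n `&` U m) y by split.
by rewrite (step_disjoint D nm).
Qed.

Lemma piece_inj : injective Sn.
Proof.
by move=> n m Snm; apply: (pieces_meet (piece_cor n)); rewrite -Snm; apply: piece_cor.
Qed.

Lemma glue_neq_set1 {z} : glue x Sn <> [set z].
Proof.
move=> E; have: [set z] x by rewrite -E; left.
have: [set z] (xn 0%N) by rewrite -E; right; exists 0%N => //; apply: piece_cor.
move=> /= xn0z xz; apply: (cor_notin_piece 0%N).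
by rewrite xz -xn0z; apply: piece_cor.
Qed.

Lemma strata_sub_piece {n T} : SSn n T -> T `<=` Sn n /\ T !=set0.
Proof. by have [_ _] := scaffold_shape (step_scaffold D n); apply. Qed.

Lemma strata_neq_glue {n T} : SSn n T -> T <> glue x Sn.
Proof.
move=> /strata_sub_piece [TSn _] E; apply: (cor_notin_piece n).
by apply: TSn; rewrite E; left.
Qed.

Lemma step_maxel T : maxel (glue x Sn) (glue_strata x Sn SSn) T <-> exists n, T = Sn n.
Proof.
have SSn_piece n : SSn n (Sn n) by have [] := scaffold_shape (step_scaffold D n).
split=> [[SST [TS T_max]]|[n ->]].
  case: SST => [//|[n _ SSnT]]; exists n.
  have [TSn _] := strata_sub_piece SSnT.
  by apply/esym/T_max => //; [right; exists n|apply: strata_neq_glue (SSn_piece n)].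
split; first by right; exists n.
split=> [|T' [->//|[m _ SSmT']] _ SnT']; first exact: strata_neq_glue (SSn_piece n).
have [T'Sm _] := strata_sub_piece SSmT'.
have mn : m = n by apply: (pieces_meet (T'Sm _ (SnT' _ (piece_cor n)))); apply: piece_cor.
by subst m; apply/seteqP; split.
Qed.

Lemma step_restr n : restr (glue_strata x Sn SSn) (Sn n) = SSn n.
Proof.
apply/seteqP; split=> [T [[->|[m _ SSmT]] TSn]|T SSnT].
- by case: (cor_notin_piece n); apply: TSn; left.
- have [TSm [y Ty]] := strata_sub_piece SSmT.
  by rewrite (pieces_meet (TSn _ Ty) (TSm _ Ty)).
- by split; [right; exists n|case: (strata_sub_piece SSnT)].
Qed.

Lemma step_finite_escape V : (\forall n \near \oo, Sn n `<=` V) ->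
  finite_set [set T | maxel (glue x Sn) (glue_strata x Sn SSn) T /\ ~ T `<=` V].
Proof.
move=> [N _ SnV]; apply: sub_finite_set (finite_image Sn (finite_II N)).
move=> T [/step_maxel [n ->] SnV']; exists n => //=.
by rewrite ltnNge; apply/negP => /SnV.
Qed.

End Step.

Lemma step_piece_match {x U Sn SSn a xn y U' Sn' SSn' a' xn'} :
  scaffold_step x U Sn SSn a xn -> scaffold_step y U' Sn' SSn' a' xn' ->
  glue x Sn = glue y Sn' -> glue_strata x Sn SSn = glue_strata y Sn' SSn' ->
  forall n, exists m, Sn n = Sn' m /\ SSn n = SSn' m.
Proof.
move=> D D' ES ESS n.
have /(step_maxel D') [m Em] : maxel (glue y Sn') (glue_strata y Sn' SSn') (Sn n).
  by rewrite -ESS -ES; apply/(step_maxel D); exists n.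
by exists m; rewrite -(step_restr D) -(step_restr D') ESS Em.
Qed.

Lemma scaffold_unique {a b S SS} {x y : X} :
  scaffold a S SS x -> scaffold b S SS y -> teq a b /\ x = y.
Proof.
move=> H; elim: H b y => {a S SS x} [x|x U Sn SSn a xn Hs IH Ha HU Hd Hc Hcl Hx] b y.
  case/scaffold_inv => [[-> [E _]]|[U' [Sn' [SSn' [a' [xn' [_ E _ D']]]]]]].
    by split; [apply: teq_refl|have: [set y] x by rewrite -E].
  by case: (glue_neq_set1 D' (esym E)).
have D : scaffold_step x U Sn SSn a xn by split.
case/scaffold_inv => [[_ [E _]]|[U' [Sn' [SSn' [a' [xn' [-> ES ESS D']]]]]]].
  by case: (glue_neq_set1 D E).
have match_l := step_piece_match D D' ES ESS.
have match_r := step_piece_match D' D (esym ES) (esym ESS).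
split; first split=> n /=.
- have [m [E1 E2]] := match_l n; exists m.
  have Hm := step_scaffold D' m; rewrite -E1 -E2 in Hm.
  by have [[]] := IH n _ _ Hm.
- have [m [E1 E2]] := match_r n; exists m.
  have Hn := step_scaffold D' n; rewrite E1 E2 in Hn.
  by have [[]] := IH m _ _ Hn.
- have: glue y Sn' x by rewrite -ES; left.
  case=> [//|[m _ Sm'x]]; have [n [E _]] := match_r m.
  by case: (cor_notin_piece D n); rewrite -E.
Qed.

Lemma subsc_step {x U Sn SSn a xn U' Sn' SSn' a' xn'} :
  scaffold_step x U Sn SSn a xn -> scaffold_step x U' Sn' SSn' a' xn' ->
  (forall n, teq (a' n) (a n) /\ subsc (Sn' n) (SSn' n) (Sn n) (SSn n)) ->
  subsc (glue x Sn') (glue_strata x Sn' SSn') (glue x Sn) (glue_strata x Sn SSn).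
Proof.
move=> D D' sub_pieces; apply: subscI.
- exists x; split; first by exists (TO a'); apply: scaffold_of_step D'.
  by exists (TO a); apply: scaffold_of_step D.
- by move=> _; exists (Sn' 0%N); apply/(step_maxel D'); exists 0%N.
- move=> B' /(step_maxel D') [n ->] b y; rewrite (step_restr D') => Hb.
  have [a'a sub] := sub_pieces n.
  exists (Sn n); split; first by apply/(step_maxel D); exists n.
  rewrite (step_restr D); split; last by exists (SSn' n).
  exists (a n), (xn n); split; first exact: (step_scaffold D).
  have [ba' _] := scaffold_unique Hb (step_scaffold D' n).
  exact: teq_trans ba' a'a.
Qed.

Section Tails.
Context {x : X} {U Sn : nat -> set X} {SSn : nat -> set (set X)}.
Context {a : nat -> tord} {xn : nat -> X}.
Hypothesis D : scaffold_step x U Sn SSn a xn.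

Lemma scaffold_step_shift N :
  scaffold_step x (fun k => U (k + N)%N) (fun k => Sn (k + N)%N)
    (fun k => SSn (k + N)%N) (fun k => a (k + N)%N) (fun k => xn (k + N)%N).
Proof.
case: D => Hs Ha HU Hd Hc Hcl Hx; split=> //.
  by move=> n m nm; apply: Hd => /addIn.
exact: (cvg_comp _ _ (cvg_addnr N) Hc).
Qed.

Lemma subsc_tail N S SS : subsc (glue x Sn) (glue_strata x Sn SSn) S SS ->
  subsc (glue x (fun k => Sn (k + N)%N))
    (glue_strata x (fun k => Sn (k + N)%N) (fun k => SSn (k + N)%N)) S SS.
Proof.
have DN := scaffold_step_shift N.
move=> H; inversion_clear H as [? ? ? ? [y [[a0 Hy] HS]] _ sub_pieces].
have [_ xy] := scaffold_unique (scaffold_of_step D) Hy; subst y.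
apply: subscI.
- exists x; split=> //.
  by exists (TO (fun k => a (k + N)%N)); apply: scaffold_of_step DN.
- by move=> _; exists (Sn N); apply/(step_maxel DN); exists 0%N.
- move=> B' /(step_maxel DN) [k ->] b z.
  rewrite (step_restr DN) -(step_restr D); apply: sub_pieces.
  by apply/(step_maxel D); exists (k + N)%N.
Qed.

(* Only finitely many pieces leave [V] and the pieces are distinct sets, so
   the indices of the escaping pieces are bounded. *)
Lemma tail_eventually_sub V : V x ->
  finite_set [set T | maxel (glue x Sn) (glue_strata x Sn SSn) T /\ ~ T `<=` V] ->
  exists N0, forall N, (N0 <= N)%N -> glue x (fun k => Sn (k + N)%N) `<=` V.
Proof.
move=> Vx /(finite_preimage (in2W (piece_inj D))) fin.
have [N0 escN0] : exists N0, forall k, ~ Sn k `<=` V -> (k < N0)%N.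
  apply: finite_nat_bounded; apply: sub_finite_set fin => k SnV.
  by split=> //; apply/(step_maxel D); exists k.
exists N0 => N N0N z [->//|[k _ Sz]]; apply: contrapT => Vz.
have := escN0 (k + N)%N (fun SV => Vz (SV _ Sz)).
by rewrite ltnNge (leq_trans N0N (leq_addl _ _)).
Qed.

End Tails.

Lemma scaffold_tails {b S' SS'} {y : X} : scaffold b S' SS' y ->
  exists P : nat -> set X * set (set X),
   (forall N, [/\ exists b', scaffold b' (P N).1 (P N).2 y /\ teq b' b,
       (P N).1 `<=` S' &
       forall S SS, subsc S' SS' S SS -> subsc (P N).1 (P N).2 S SS]) /\
   forall V, V y -> finite_set [set T | maxel S' SS' T /\ ~ T `<=` V] ->
     exists N0, forall N, (N0 <= N)%N -> (P N).1 `<=` V.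
Proof.
case/scaffold_inv => [[-> [-> ->]]|[U [Sn [SSn [a [xn [-> -> -> D]]]]]]].
  exists (fun=> ([set y], [set [set y]])); split=> [N|V Vy _].
    by split=> //; exists TZ; split; [apply: scaffold0|apply: teq_refl].
  by exists 0%N => N _ z ->.
exists (fun N => (glue y (fun k => Sn (k + N)%N),
                  glue_strata y (fun k => Sn (k + N)%N) (fun k => SSn (k + N)%N))).
split=> [N|V Vy fin]; last exact: (tail_eventually_sub D V Vy fin).
split=> //=; last by move=> S SS; apply: (subsc_tail D N S SS).
- exists (TO (fun k => a (k + N)%N)); split.
    exact/scaffold_of_step/(scaffold_step_shift D).
  exact: teq_TO_shift (step_tle D).
- by move=> z [->|[k _ Sz]]; [left|right; exists (k + N)%N].
Qed.

Definition refinement a S SS (x : X) a' S' SS' :=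
  [/\ scaffold a' S' SS' x, teq a' a, S' `<=` S & subsc S' SS' S SS].

Definition almost_inside (UU : set (set X)) (x : X) S SS :=
  forall V, UU V -> V x -> finite_set [set T | maxel S SS T /\ ~ T `<=` V].

Lemma refinement_tails {a S SS} {y : X} {b S' SS'} :
  refinement a S SS y b S' SS' ->
  exists P : nat -> set X * set (set X),
   (forall N, exists b', refinement a S SS y b' (P N).1 (P N).2) /\
   forall V, V y -> finite_set [set T | maxel S' SS' T /\ ~ T `<=` V] ->
     exists N0, forall N, (N0 <= N)%N -> (P N).1 `<=` V.
Proof.
case=> H ba S'S sub; have [P [PN P_sub]] := scaffold_tails H.
exists P; split=> // N; have [[b' [Hb' b'b]] PS' Psub] := PN N.
exists b'; split=> //; [exact: teq_trans b'b ba|exact: subset_trans S'S|exact: Psub].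
Qed.

Lemma refinement_step {x U Sn SSn a xn Sn' SSn' c} :
  scaffold_step x U Sn SSn a xn ->
  (forall n, refinement (a n) (Sn n) (SSn n) (xn n) (c n) (Sn' n) (SSn' n)) ->
  scaffold_step x U Sn' SSn' c xn /\
  refinement (TO a) (glue x Sn) (glue_strata x Sn SSn) x
    (TO c) (glue x Sn') (glue_strata x Sn' SSn').
Proof.
move=> D R.
have D' : scaffold_step x U Sn' SSn' c xn.
  case: D => Hs Ha HU Hd Hc Hcl Hx; split=> // n; first by case: (R n).
    have [_ [cn _] _ _] := R n; have [_ [_ cSn] _ _] := R n.+1.
    exact: tle_trans cn (tle_trans (Ha n) cSn).
  by apply: subset_trans (Hcl n); apply: closureS; case: (R n).
split=> //; split; first exact: scaffold_of_step D'.
- by apply: teq_TO => n; case: (R n).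
- move=> z [->|[n _ Sz]]; first by left.
  by right; exists n => //; case: (R n) => _ _ /(_ z Sz).
- by apply: subsc_step D D' _ => n; case: (R n).
Qed.

Lemma almost_inside_step {UU : set (set X)} {x U Sn SSn a xn} :
  (forall V, UU V -> open V) -> card_lt_b UU ->
  scaffold_step x U Sn SSn a xn ->
  (forall n, exists c S' SS', refinement (a n) (Sn n) (SSn n) (xn n) c S' SS' /\
                             almost_inside UU (xn n) S' SS') ->
  exists c S' SS', refinement (TO a) (glue x Sn) (glue_strata x Sn SSn) x c S' SS' /\
                  almost_inside UU x S' SS'.
Proof.
move=> UU_open UUb D IH.
have /choice [P PP] : forall n, exists P : nat -> set X * set (set X),
    (forall N, exists c, refinement (a n) (Sn n) (SSn n) (xn n) c (P N).1 (P N).2) /\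
    forall V, UU V -> V (xn n) -> exists N0, forall N, (N0 <= N)%N -> (P N).1 `<=` V.
  move=> n; have [c [S' [SS' [R fin]]]] := IH n.
  have [P [RP P_sub]] := refinement_tails R.
  by exists P; split=> // V UUV Vxn; apply: P_sub Vxn (fin V UUV Vxn).
pose Q n N := (P n N).1.
have /choice [h Qh] : forall V, exists hV : nat -> nat,
    forall n, UU V -> V (xn n) -> forall N, (hV n <= N)%N -> Q n N `<=` V.
  move=> V; suff /choice [hV hVP] : forall n, exists N0,
      UU V -> V (xn n) -> forall N, (N0 <= N)%N -> Q n N `<=` V by exists hV.
  move=> n; have [[UUV Vxn]|nV] := pselect (UU V /\ V (xn n)); last first.
    by exists 0%N => UUV Vxn; case: nV.
  by have [N0 PN0] := (PP n).2 V UUV Vxn; exists N0 => _ _.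
have [g hg] := card_lt_b_dominated h UUb.
have /choice [c Rc] : forall n, exists c,
    refinement (a n) (Sn n) (SSn n) (xn n) c (Q n (g n)) (P n (g n)).2.
  by move=> n; apply: (PP n).1.
have [D' R] := refinement_step D Rc.
exists (TO c); do 2 eexists; split; first exact: R.
move=> V UUV Vx; apply: (step_finite_escape D').
have Vxn : \forall n \near \oo, V (xn n).
  by apply: (step_cvg D); apply: open_nbhs_nbhs; split=> //; apply: UU_open.
by apply: filterS2 Vxn (hg V UUV) => n Vxn hgn; apply: Qh.
Qed.

Lemma scaffold_refinement {UU : set (set X)} {a S SS} {x : X} :
  (forall V, UU V -> open V) -> card_lt_b UU -> scaffold a S SS x ->
  exists a' S' SS', refinement a S SS x a' S' SS' /\ almost_inside UU x S' SS'.
Proof.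
move=> UU_open UUb; elim=> {a S SS x} [x|x U Sn SSn a xn Hs IH Ha HU Hd Hc Hcl Hx].
  exists TZ, [set x], [set [set x]]; split=> [|V _ _].
    by split; [apply: scaffold0|apply: teq_refl| |apply: subsc_singleton].
  by apply: sub_finite_set (finite_set0 _) => T [/maxel_singleton].
by apply: almost_inside_step UU_open UUb _ IH; split.
Qed.

End Scaffolds.

Theorem lemma12 (X : topologicalType) (a : tord) (S : set X)
    (SS : set (set X)) (x : X) (UU : set (set X)) :
  scaffold a S SS x ->
  (forall U, UU U -> open U) ->
  card_lt_b UU ->
  exists (S' : set X) (SS' : set (set X)),
    subsc S' SS' S SS /\
    forall U, UU U -> forall x', (exists a', scaffold a' S' SS' x') -> U x' ->
      finite_set [set T | maxel S' SS' T /\ ~ (T `<=` U)].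
Proof.
move=> H UU_open UUb.
have [a' [S' [SS' [[H' _ _ sub] fin]]]] := scaffold_refinement UU_open UUb H.
exists S', SS'; split=> // U UUU x' [a'' H''].
by have [_ <-] := scaffold_unique H' H''; apply: fin.
Qed.
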